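(* Let $G$ be a connected bipartite graph with color classes $E$ and $V$ and root polytope $Q_G$. Let $C$ be a minimal directed cut of $G$, arising from the splitting $V\cup E=S\cup T$, and let $\lambda_C\colon\mathbf R^E\oplus\mathbf R^V\to\mathbf R$ be the linear functional with $\lambda_C(\mathbf i_{\{x\}})=1$ for $x\in(S\cap V)\cup(T\cap E)$ and $\lambda_C(\mathbf i_{\{x\}})=-1$ for $x\in(S\cap E)\cup(T\cap V)$. Then the hyperplane $\Pi_C=\ker\lambda_C$ intersects $Q_G$ in a facet of $Q_G$. Furthermore, every facet of $Q_G$ arises in this way from some minimal directed cut.
   Context: Bipartite graphs have no multiple edges; every edge joins $E$ to $V$. $Q_G\subset\mathbf R^E\oplus\mathbf R^V$ is the convex hull of $\mathbf i_{\{e\}}+\mathbf i_{\{v\}}$ over edges $ev$ of $G$, where $\mathbf i$ denotes indicator vectors. A cut is the set of edges between the two parts of a partition $S\cup T$ of the vertex set into disjoint subsets; a non-empty cut is minimal if it contains no other non-empty cut. A directed cut is a cut arising from a splitting $V\cup E=S\cup T$ such that $G$ has no edges between $E\cap S$ and $V\cap T$ (so each cut edge joins an element of $S\cap V$ to an element of $T\cap E$). A facet is a face of codimension one. *)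

From HB Require Import structures.
From mathcomp Require Import all_boot all_order all_algebra.
From mathcomp Require Import reals.

Set Implicit Arguments.
Unset Strict Implicit.
Unset Printing Implicit Defensive.

Import Order.TTheory GRing.Theory Num.Theory.
Local Open Scope ring_scope.

Definition affine_indep (R : realType) (X : finType) (k : nat)
    (p : 'I_k -> X -> R) : Prop :=
  forall c : 'I_k -> R,
    \sum_(i < k) c i = 0 ->
    (forall y : X, \sum_(i < k) c i * p i y = 0) ->
    forall i, c i = 0.

Definition has_aff_indep (R : realType) (X : finType)
    (A : (X -> R) -> Prop) (k : nat) : Prop :=
  exists p : 'I_k -> X -> R, (forall i, A (p i)) /\ affine_indep p.

Definition is_face (R : realType) (X : finType)
    (P F : (X -> R) -> Prop) : Prop :=
  exists (a : X -> R) (c : R),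
    (forall x, P x -> \sum_(y : X) a y * x y <= c) /\
    (forall x, F x <-> (P x /\ \sum_(y : X) a y * x y = c)).

(* F is a facet of P: a face with dim F = dim P - 1, where the (affine)
   dimension of a set is (max number of affinely independent points) - 1.
   Here dim P = n and dim F = n - 1. *)
Definition is_facet (R : realType) (X : finType)
    (P F : (X -> R) -> Prop) : Prop :=
  is_face P F /\
  exists n : nat,
    [/\ has_aff_indep P n.+1, ~ has_aff_indep P n.+2,
        has_aff_indep F n & ~ has_aff_indep F n.+1].

Definition bip_adj (E V : finType) (g : {set E * V}) : rel (E + V)%type :=
  fun x y =>
    match x, y with
    | inl e, inr v => (e, v) \in g
    | inr v, inl e => (e, v) \in g
    | _, _ => false
    end.

Definition bip_connected (E V : finType) (g : {set E * V}) : Prop :=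
  forall x y : (E + V)%type, connect (bip_adj g) x y.

Definition cut (E V : finType) (g : {set E * V}) (S : {set (E + V)%type})
    : {set E * V} :=
  [set p in g | ((inl p.1 : (E + V)%type) \in S)
                != ((inr p.2 : (E + V)%type) \in S)].

Definition minimal_cut (E V : finType) (g : {set E * V})
    (S : {set (E + V)%type}) : Prop :=
  cut g S != set0 /\
  forall S' : {set (E + V)%type},
    cut g S' != set0 -> cut g S' \subset cut g S -> cut g S' = cut g S.

Definition directed_split (E V : finType) (g : {set E * V})
    (S : {set (E + V)%type}) : Prop :=
  forall e v, (e, v) \in g ->
    (inl e : (E + V)%type) \in S -> (inr v : (E + V)%type) \in S.

Definition indic (R : realType) (X : finType) (x : X) : X -> R :=
  fun y => if y == x then 1 else 0.

Definition root_polytope (R : realType) (E V : finType) (g : {set E * V})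
    : ((E + V)%type -> R) -> Prop :=
  fun x => exists w : E * V -> R,
    [/\ (forall p, 0 <= w p),
        (forall p, p \notin g -> w p = 0),
        \sum_(p : E * V) w p = 1 &
        forall y : (E + V)%type,
          x y = \sum_(p : E * V)
                  w p * (indic R (inl p.1 : (E + V)%type) y
                         + indic R (inr p.2 : (E + V)%type) y)].

Definition cut_sign (R : realType) (E V : finType) (S : {set (E + V)%type})
    (y : (E + V)%type) : R :=
  match y with
  | inl _ => if y \in S then -1 else 1
  | inr _ => if y \in S then 1 else -1
  end.

Definition lambda_C (R : realType) (E V : finType) (S : {set (E + V)%type})
    (x : (E + V)%type -> R) : R :=
  \sum_(y : (E + V)%type) cut_sign R S y * x y.

Arguments indic R {X} x y.
Arguments root_polytope R {E V} g x.
Arguments cut_sign R {E V} S y.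
Arguments lambda_C R {E V} S x.

From HB Require Import structures.
From mathcomp Require Import all_boot all_order all_algebra.
From mathcomp Require Import reals.
From mathcomp Require Import zify ring lra.

(* Points of a root polytope Q_H lie on the hyperplane sum_E x = 1, so the
   affine dimension of Q_H is one less than the rank of the edge vectors
   i_e + i_v (ev in H), i.e. |E| + |V| minus the dimension of the space of
   z with z_e + z_v = 0 along H.  Changing the sign of z on V turns these z
   into potentials constant along the edges of H: one free value per
   component of H.  Hence Q_g has dimension |E| + |V| - 2 for connected g,
   and a face Q_H (H the edges tight for a supporting functional) is a facet
   iff H has exactly two components.  For a minimal directed cut C the graph
   g - C has exactly two components, and lambda_C cuts out Q_(g - C).
   Conversely, for a facet the twisted supporting functional is a potential
   constant on the two components of the tight edges and increasing along
   every other edge, so those edges form a directed cut, minimal because its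
   complement has only two components. *)

Set Implicit Arguments.
Unset Strict Implicit.
Unset Printing Implicit Defensive.

Import Order.TTheory GRing.Theory Num.Theory.
Local Open Scope ring_scope.

Section PointMatrices.
Variables (R : realType) (X : finType).
Local Notation N := #|{: X}|.

Definition rowv (x : X -> R) : 'rV[R]_N := \row_j x (enum_val j).
Definition funv (u : 'rV[R]_N) : X -> R := fun x => u 0 (enum_rank x).

Lemma funvK : cancel funv rowv.
Proof. by move=> u; apply/rowP => j; rewrite mxE /funv enum_valK. Qed.

Lemma rowvK x : funv (rowv x) =1 x.
Proof. by move=> y; rewrite /funv mxE enum_rankK. Qed.

Lemma funv_inj u v : funv u =1 funv v -> u = v.
Proof. by move=> uv; rewrite -(funvK u) -(funvK v); apply/rowP => j; rewrite !mxE. Qed.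

Lemma sum_enum_val (T : finType) (F : T -> R) :
  \sum_(j < #|{: T}|) F (enum_val j) = \sum_x F x.
Proof. by rewrite -(big_enum_val (A := {: T})); apply: eq_bigl => x; rewrite inE. Qed.

Definition points_mx k (p : 'I_k -> X -> R) : 'M[R]_(k, N) :=
  \matrix_(i, j) p i (enum_val j).

Lemma row_points_mx k (p : 'I_k -> X -> R) i : row i (points_mx p) = rowv (p i).
Proof. by apply/rowP => j; rewrite !mxE. Qed.

Lemma funv_mul_points_mx k (c : 'rV_k) p x :
  funv (c *m points_mx p) x = \sum_i c 0 i * p i x.
Proof. by rewrite /funv mxE; apply: eq_bigr => i _; rewrite mxE enum_rankK. Qed.

Lemma submx_points_mxP k (p : 'I_k -> X -> R) y :
  (rowv y <= points_mx p)%MS <-> exists c : 'I_k -> R, forall x, y x = \sum_i c i * p i x.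
Proof.
split => [/submxP [D yD] | [c yc]].
  by exists (D 0) => x; rewrite -funv_mul_points_mx -yD rowvK.
apply/submxP; exists (\row_i c i); apply: funv_inj => x.
rewrite rowvK funv_mul_points_mx yc; apply: eq_bigr => i _; by rewrite mxE.
Qed.

Lemma sub_kermx_tr_points_mxP k (p : 'I_k -> X -> R) z :
  (rowv z <= kermx (points_mx p)^T)%MS <-> forall i, \sum_x z x * p i x = 0.
Proof.
have entry i : (rowv z *m (points_mx p)^T) 0 i = \sum_x z x * p i x.
  by rewrite mxE -[RHS]sum_enum_val; apply: eq_bigr => j _; rewrite !mxE.
split => [/sub_kermxP zP0 i | z0]; first by rewrite -entry zP0 mxE.
by apply/sub_kermxP/rowP => i; rewrite entry z0 mxE.
Qed.

Lemma row_free_points_mx_diag k (p : 'I_k -> X -> R) (w : 'I_k -> X) :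
  (forall i, p i (w i) != 0) -> (forall i j, i != j -> p j (w i) = 0) ->
  row_free (points_mx p).
Proof.
move=> diag offdiag; apply: inj_row_free => c cP0; apply/rowP => i.
have := funv_mul_points_mx c p (w i); rewrite cP0 /funv !mxE (bigD1 i) //=.
rewrite big1 ?addr0 => [/esym/eqP|j ji]; last by rewrite offdiag ?mulr0 // eq_sym.
by rewrite mulf_eq0 (negPf (diag i)) orbF => /eqP.
Qed.

Lemma affine_indep_row_free k (p : 'I_k -> X -> R) (a : X -> R) :
  (forall i, \sum_(y : X) a y * p i y = 1) ->
  affine_indep p <-> row_free (points_mx p).
Proof.
move=> on_hyperplane; split => [indep | free c sum0 comb0 i].
  apply: inj_row_free => c cP0; apply/rowP => i; rewrite mxE.
  have comb0 y : \sum_i c 0 i * p i y = 0.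
    by rewrite -funv_mul_points_mx cP0 /funv mxE.
  apply: (indep (c 0)) => //; transitivity (\sum_(y : X) a y * \sum_i c 0 i * p i y).
    rewrite (eq_bigr (fun i => \sum_y c 0 i * (a y * p i y))); last first.
      by move=> j _; rewrite -mulr_sumr on_hyperplane mulr1.
    rewrite exchange_big; apply: eq_bigr => y _; rewrite mulr_sumr.
    by apply: eq_bigr => j _; ring.
  by rewrite big1 // => y _; rewrite comb0 mulr0.
have /(row_free_inj free) /rowP /(_ i) : (\row_i c i) *m points_mx p = 0 *m points_mx p.
  apply: funv_inj => x; rewrite mul0mx funv_mul_points_mx /funv mxE -[RHS](comb0 x).
  by apply: eq_bigr => j _; rewrite mxE.
by rewrite !mxE.
Qed.

Lemma row_free_row_neq0 m (M : 'M[R]_(m, N)) i : row_free M -> row i M != 0.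
Proof.
move=> free; apply/eqP => Mi0.
have delta0 : delta_mx (0 : 'I_1) i *m M = 0 *m M by rewrite -rowE Mi0 mul0mx.
have /matrixP /(_ 0 i) := row_free_inj free delta0.
by rewrite !mxE !eqxx => /eqP; rewrite oner_eq0.
Qed.

Lemma has_aff_indep_leq (A : (X -> R) -> Prop) k j :
  (j <= k)%N -> has_aff_indep A k -> has_aff_indep A j.
Proof.
move=> le_jk [p [Ap indep]]; exists (fun i => p (widen_ord le_jk i)).
split => // c sum0 comb0 i.
pose c' (i' : 'I_k) := if insub (val i') is Some i then c i else 0.
have sum_c' (F : 'I_k -> R) : \sum_i' c' i' * F i' = \sum_i c i * F (widen_ord le_jk i).
  rewrite (bigID (fun i' : 'I_k => (i' < j)%N)) /= [X in _ + X]big1 ?addr0.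
    by rewrite (big_ord_narrow le_jk); apply: eq_bigr => i' _; rewrite /c' /= valK.
  by move=> i' ge_i'j; rewrite /c' insubN ?mul0r.
have := indep c' _ _ (widen_ord le_jk i); rewrite /c' /= valK; apply.
  by rewrite -[RHS]sum0 (eq_bigr (fun i' => c' i' * 1)) ?sum_c';
    [apply: eq_bigr => i' _|move=> i' _]; rewrite mulr1.
by move=> y; rewrite sum_c' comb0.
Qed.

Lemma has_aff_indep_ext (A B : (X -> R) -> Prop) k :
  (forall x, A x <-> B x) -> has_aff_indep A k -> has_aff_indep B k.
Proof. by move=> AB [p [Ap indep]]; exists p; split => // i; apply/AB. Qed.

Lemma has_aff_indep_rank (A : (X -> R) -> Prop) (a : X -> R) m (M : 'M[R]_(m, N)) :
  (forall x, A x -> \sum_(y : X) a y * x y = 1) ->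
  (forall x, A x -> (rowv x <= M)%MS) ->
  (forall i, row i M != 0 -> A (funv (row i M))) ->
  forall k, has_aff_indep A k <-> (k <= \rank M)%N.
Proof.
move=> on_hyperplane A_sub rowsA k; split => [[p [Ap indep]] | le_k].
  have /eqP <- : row_free (points_mx p).
    by apply/(affine_indep_row_free (fun i => on_hyperplane _ (Ap i))).
  by apply: mxrankS; apply/row_subP => i; rewrite row_points_mx A_sub.
apply: has_aff_indep_leq le_k _.
pose f := maxrankfun M; have free := maxrowsub_free M.
have Af i : A (funv (row (f i) M)).
  by apply: rowsA; rewrite -row_rowsub row_free_row_neq0.
exists (fun i => funv (row (f i) M)); split => //.
apply/(affine_indep_row_free (fun i => on_hyperplane _ (Af i))).
suff -> : points_mx (fun i => funv (row (f i) M)) = rowsub f M by [].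
by apply/row_matrixP => i; rewrite row_points_mx funvK row_rowsub.
Qed.

Lemma facet_dimension_rank (P F : (X -> R) -> Prop) r s :
  (forall k, has_aff_indep P k <-> (k <= r)%N) ->
  (forall k, has_aff_indep F k <-> (k <= s)%N) ->
  (exists n, [/\ has_aff_indep P n.+1, ~ has_aff_indep P n.+2,
                has_aff_indep F n & ~ has_aff_indep F n.+1]) <-> r = s.+1.
Proof.
move=> dimP dimF; split => [[n []] | rs].
  by rewrite !dimP !dimF; lia.
by exists s; split; rewrite ?dimP ?dimF ?rs; lia.
Qed.

End PointMatrices.

Section RootPolytope.
Variables (R : realType) (E V : finType).
Local Notation X := (E + V)%type.
Local Notation N := #|{: X}|.
Implicit Types (g H : {set E * V}) (S : {set X}) (x : X -> R).

Definition edge_pt (p : E * V) : X -> R :=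
  fun y => indic R (inl p.1 : X) y + indic R (inr p.2 : X) y.

Lemma sum_mul_indic (f : X -> R) z : \sum_y f y * indic R z y = f z.
Proof.
rewrite (bigD1 z) //= /indic eqxx mulr1 big1 ?addr0 // => y /negPf ->.
by rewrite mulr0.
Qed.

Lemma dot_edge_pt (a : X -> R) p : \sum_y a y * edge_pt p y = a (inl p.1) + a (inr p.2).
Proof. by rewrite -!sum_mul_indic -big_split; apply: eq_bigr => y _; rewrite mulrDr. Qed.

Lemma dot_edge_combination (a : X -> R) x (w : E * V -> R) :
  (forall y, x y = \sum_p w p * edge_pt p y) ->
  \sum_y a y * x y = \sum_p w p * (a (inl p.1) + a (inr p.2)).
Proof.
move=> xw; under eq_bigr do rewrite xw mulr_sumr.
rewrite exchange_big; apply: eq_bigr => p _.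
by rewrite -dot_edge_pt mulr_sumr; apply: eq_bigr => y _; ring.
Qed.

Lemma root_polytope_edge_pt H p : p \in H -> root_polytope R H (edge_pt p).
Proof.
move=> pH; exists (fun p' => (p' == p)%:R); split => [p'|p' p'H|//|y].
- exact: ler0n.
- by case: eqP p'H => // ->; rewrite pH.
- by rewrite (bigD1 p) //= eqxx big1 ?addr0 // => p' /negPf ->.
- rewrite (bigD1 p) //= eqxx mul1r big1 ?addr0 // => p' /negPf ->.
  by rewrite mul0r.
Qed.

Lemma dot_slack (a : X -> R) c x (w : E * V -> R) :
  \sum_p w p = 1 -> (forall y, x y = \sum_p w p * edge_pt p y) ->
  c - \sum_y a y * x y = \sum_p w p * (c - (a (inl p.1) + a (inr p.2))).
Proof.
move=> w1 xw; rewrite (dot_edge_combination _ xw) -[c in LHS]mul1r -w1 mulr_suml -sumrB.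
by apply: eq_bigr => p _; rewrite mulrBr.
Qed.

Lemma root_polytope_dot_le H (a : X -> R) c x :
  (forall p, p \in H -> a (inl p.1) + a (inr p.2) <= c) ->
  root_polytope R H x -> \sum_y a y * x y <= c.
Proof.
move=> a_le [w [w0 wH w1 xw]]; rewrite -subr_ge0 (dot_slack _ _ w1 xw) sumr_ge0 // => p _.
by case: (boolP (p \in H)) => [/a_le ale|/wH ->]; rewrite ?mul0r // mulr_ge0 // subr_ge0.
Qed.

Lemma root_polytope_face g (a : X -> R) c x :
  (forall p, p \in g -> a (inl p.1) + a (inr p.2) <= c) ->
  (root_polytope R g x /\ \sum_y a y * x y = c) <->
  root_polytope R [set p in g | a (inl p.1) + a (inr p.2) == c] x.
Proof.
move=> a_le; split => [[[w [w0 wg w1 xw]] ax] | [w [w0 wT w1 xw]]].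
  pose slack p := w p * (c - (a (inl p.1) + a (inr p.2))).
  have tight p : slack p = 0.
    apply: (@psumr_eq0P _ _ xpredT slack) => // [p' _|].
      rewrite /slack; have [/a_le ale|/wg ->] := boolP (p' \in g); last by rewrite mul0r.
      by rewrite mulr_ge0 // subr_ge0.
    by rewrite -(dot_slack _ _ w1 xw) ax subrr.
  exists w; split => // p; rewrite inE negb_and => /orP [/wg //| not_tight].
  move/eqP: (tight p); rewrite mulf_eq0 subr_eq0 (eq_sym c) (negPf not_tight) orbF.
  by move/eqP.
split.
  by exists w; split => // p pg; apply: wT; rewrite inE negb_and pg.
apply/eqP; rewrite eq_sym -subr_eq0 (dot_slack _ _ w1 xw) big1 // => p _.
have [pT|/wT ->] := boolP (p \in [set p in g | a (inl p.1) + a (inr p.2) == c]).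
  by move: pT; rewrite inE => /andP [_ /eqP ->]; rewrite subrr mulr0.
by rewrite mul0r.
Qed.

Lemma root_polytope_ext H x x' : x =1 x' -> root_polytope R H x -> root_polytope R H x'.
Proof. by move=> xx' [w [w0 wH w1 xw]]; exists w; split => // y; rewrite -xx'. Qed.

Lemma root_polytope_sum_inl H x :
  root_polytope R H x -> \sum_y (if y is inl _ then 1 else 0) * x y = 1.
Proof.
case=> w [_ _ w1 xw]; rewrite (dot_edge_combination _ xw) -[RHS]w1.
by apply: eq_bigr => p _; rewrite /= addr0 mulr1.
Qed.

Definition edge_mx H : 'M[R]_(#|{: E * V}|, N) :=
  points_mx (fun i => if enum_val i \in H then edge_pt (enum_val i) else fun _ => 0).

Lemma has_aff_indep_root_polytope H k :
  has_aff_indep (root_polytope R H) k <-> (k <= \rank (edge_mx H))%N.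
Proof.
apply: (has_aff_indep_rank (@root_polytope_sum_inl H)) => [x [w [_ wH _ xw]] | i].
  apply/submxP; exists (\row_i w (enum_val i)); apply: funv_inj => y.
  rewrite rowvK funv_mul_points_mx xw -sum_enum_val; apply: eq_bigr => j _; rewrite mxE.
  by case: ifP => // /negbT /wH ->; rewrite !mul0r.
rewrite row_points_mx; case: ifP => [iH _ | _ /negP []]; last first.
  by apply/eqP/rowP => j; rewrite !mxE.
by apply: root_polytope_ext (root_polytope_edge_pt iH) => y; rewrite rowvK.
Qed.

Definition ann_mx H := kermx (edge_mx H)^T.

Lemma rank_edge_mx H : \rank (edge_mx H) = (N - \rank (ann_mx H))%N.
Proof. by rewrite /ann_mx mxrank_ker mxrank_tr subKn // rank_leq_col. Qed.

Definition twist (t : X -> R) (y : X) : R := (if y is inl _ then 1 else -1) * t y.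

Lemma twistK t : twist (twist t) =1 t.
Proof. by case=> y; rewrite /twist /= ?mul1r // mulrA mulrNN mulr1 mul1r. Qed.

Definition balanced (T : Type) H (t : X -> T) :=
  forall p, p \in H -> t (inl p.1) = t (inr p.2).

Lemma sub_ann_mx_balanced H t : (rowv (twist t) <= ann_mx H)%MS <-> balanced H t.
Proof.
rewrite sub_kermx_tr_points_mxP; split => [bal p pH | bal i].
  move/(_ (enum_rank p)): bal; rewrite enum_rankK pH dot_edge_pt /twist /=.
  by rewrite mul1r mulN1r => /eqP; rewrite subr_eq0 => /eqP.
case: ifP => [/bal|_]; last by rewrite big1 // => y _; rewrite mulr0.
by rewrite dot_edge_pt /twist /= mul1r mulN1r => ->; rewrite subrr.
Qed.

Definition constant_on (B T : Type) (b : X -> B) (t : X -> T) :=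
  forall y z, b y = b z -> t y = t z.

Section Blocks.
Variables (B : finType) (b : X -> B) (w : B -> X).
Hypothesis wK : cancel w b.

Definition blocks_mx : 'M[R]_(#|{: B}|, N) :=
  points_mx (fun j => twist (fun y => (b y == enum_val j)%:R)).

Lemma rank_blocks_mx : \rank blocks_mx = #|{: B}|.
Proof.
apply/eqP; apply: (row_free_points_mx_diag (w := fun j => w (enum_val j))) => [j | i j ij].
  by rewrite /twist wK eqxx mulr1; case: (w _) => _; rewrite ?oppr_eq0 oner_eq0.
by rewrite /twist wK (inj_eq enum_val_inj) (negPf ij) mulr0.
Qed.

Lemma blocks_mx_sub_ann H : balanced H b -> (blocks_mx <= ann_mx H)%MS.
Proof.
by move=> bal; apply/row_subP => j; rewrite row_points_mx sub_ann_mx_balanced => p /bal ->.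
Qed.

Lemma sub_blocks_mxP t : (rowv (twist t) <= blocks_mx)%MS <-> constant_on b t.
Proof.
rewrite submx_points_mxP; split => [[c tc] y z yz | const].
  have tE u : t u = \sum_j c j * (b u == enum_val j)%:R.
    rewrite -(twistK t u) {1}/twist tc mulr_sumr; apply: eq_bigr => j _.
    by rewrite /twist; case: u => u /=; ring.
  by rewrite !tE yz.
exists (fun j => t (w (enum_val j))) => y.
transitivity (twist (fun u => \sum_(v : B) t (w v) * (b u == v)%:R) y).
  rewrite /twist (bigD1 (b y)) //= eqxx mulr1 big1 ?addr0.
    by rewrite (const _ _ (wK (b y))).
  by move=> v /negPf; rewrite eq_sym => ->; rewrite mulr0.
rewrite /twist -sum_enum_val mulr_sumr; apply: eq_bigr => j _; ring.
Qed.

Lemma rank_ann_mx_blocks H : balanced H b ->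
  \rank (ann_mx H) = #|{: B}| <-> (forall t : X -> R, balanced H t -> constant_on b t).
Proof.
move=> bal; have [_] := mxrank_leqif_sup (blocks_mx_sub_ann bal).
rewrite rank_blocks_mx => eq_rank; split => [rk t /sub_ann_mx_balanced tann | const].
  by apply/sub_blocks_mxP; apply: submx_trans tann _; rewrite -eq_rank rk eqxx.
apply/eqP; rewrite eq_sym eq_rank; apply/row_subP => i.
set u := row i _; have uE : u = rowv (twist (twist (funv u))).
  by apply: funv_inj => y; rewrite rowvK twistK.
by rewrite uE sub_blocks_mxP; apply: const; rewrite -sub_ann_mx_balanced -uE row_sub.
Qed.

End Blocks.

Lemma cut_setC g S : cut g (~: S) = cut g S.
Proof. by apply/setP => p; rewrite !inE; case: (_ \in S); case: (_ \in S). Qed.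

Lemma connected_cut_eq0 g S : bip_connected g -> cut g S = set0 ->
  forall y z, (y \in S) = (z \in S).
Proof.
move=> conn cut0; have uncut e v : (e, v) \in g -> (inl e \in S) = (inr v \in S).
  move=> ev; apply/eqP; apply: contraT => ne.
  have : (e, v) \in cut g S by rewrite inE ev.
  by rewrite cut0 inE.
have closedS : closed (bip_adj g) S.
  by move=> [e|v] [e'|v'] //= ev; rewrite (uncut _ _ ev).
by move=> y z; have := closed_connect closedS (conn y z).
Qed.

Lemma balanced_connected_const g (T : eqType) (t : X -> T) :
  bip_connected g -> balanced g t -> forall y z, t y = t z.
Proof.
move=> conn bal y z; apply/eqP; rewrite eq_sym.
have -> : (t z == t y) = (z \in [set u | t u == t y]) by rewrite inE.
have cut0 : cut g [set u | t u == t y] = set0.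
  by apply/setP => p; rewrite !inE; case: (boolP (p \in g)) => //= /bal ->; rewrite eqxx.
by rewrite (connected_cut_eq0 conn cut0 z y) inE.
Qed.

Lemma rank_ann_mx_connected g : bip_connected g -> \rank (ann_mx g) = minn N 1.
Proof.
move=> conn; case: (pickP (@predT X)) => [x0 _ | noX].
  have /minn_idPr -> : (1 <= N)%N by apply/card_gt0P; exists x0.
  rewrite -card_unit; apply/(rank_ann_mx_blocks (w := fun _ => x0)) => [[] // | p _ // |].
  by move=> t bal y z _; apply: balanced_connected_const conn bal y z.
have N0 : N = 0%N by apply: eq_card0.
by have := rank_leq_col (ann_mx g); lia.
Qed.

Lemma mem_uncut g S p :
  (p \in g :\: cut g S) = (p \in g) && ((inl p.1 \in S) == (inr p.2 \in S)).
Proof. by rewrite !inE; case: (p \in g); rewrite /= ?negbK ?andbT. Qed.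

Lemma cut_refine_sub g S K (P : pred X) : cut g K = cut g S ->
  (forall p, p \in g :\: cut g S -> P (inl p.1) = P (inr p.2)) ->
  cut g [set y in K | P y] \subset cut g S.
Proof.
move=> KS Pbal; apply/subsetP => -[e v]; rewrite -KS !inE /= => /andP [ev cutP].
rewrite ev /=; apply: contraNN cutP => /eqP sameK.
have /Pbal /= -> : (e, v) \in g :\: cut g S by rewrite -KS mem_uncut ev sameK /=.
by rewrite sameK.
Qed.

Lemma minimal_cut_side_const g S K (P : pred X) :
  bip_connected g -> minimal_cut g S -> cut g K = cut g S ->
  (forall p, p \in g :\: cut g S -> P (inl p.1) = P (inr p.2)) ->
  {in K &, forall y z, P y = P z}.
Proof.
move=> conn [cutS0 Smin] KS Pbal y z yK zK; apply/eqP; apply: contraT => Pyz.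
(* Splitting K along P gives two parts whose cuts lie in cut S, hence equal it
   by minimality; but an edge of cut S leaves K from one of the parts only. *)
have part_cut (Q : pred X) y' z' : y' \in K -> z' \in K -> Q y' -> ~~ Q z' ->
    (forall p, p \in g :\: cut g S -> Q (inl p.1) = Q (inr p.2)) ->
    cut g [set u in K | Q u] = cut g S.
  move=> y'K z'K Qy' nQz' Qbal; apply: Smin; last exact: cut_refine_sub.
  apply/eqP => cut0; have := connected_cut_eq0 conn cut0 y' z'.
  by rewrite !inE y'K z'K Qy' (negbTE nQz').
rewrite eq_sym in Pyz.
have cut1 : cut g [set u in K | P u == P y] = cut g S.
  by apply: (part_cut _ y z) => // p /Pbal ->.
have cut2 : cut g [set u in K | P u != P y] = cut g S.
  by apply: (part_cut _ z y) => //= [|p /Pbal ->]; rewrite ?negbK.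
have [[e v] pS] := set0Pn _ cutS0.
move: (pS) (pS) (pS); rewrite -{1}cut1 -{1}cut2 -{1}KS !inE /=.
by case: ((e, v) \in g); case: (inl e \in K); case: (inr v \in K);
  case: (P (inl e) == P y); case: (P (inr v) == P y).
Qed.

Lemma minimal_cut_constant_on g S (T : eqType) (t : X -> T) :
  bip_connected g -> minimal_cut g S -> balanced (g :\: cut g S) t ->
  constant_on (fun y => y \in S) t.
Proof.
move=> conn Smin bal y z yzS; apply/eqP; rewrite eq_sym.
have Pbal p : p \in g :\: cut g S -> (t (inl p.1) == t y) = (t (inr p.2) == t y).
  by move/bal ->.
have [K KS [yK zK]] : exists2 K, cut g K = cut g S & y \in K /\ z \in K.
  case: (boolP (y \in S)) => yS; first by exists S; rewrite // -yzS.
  by exists (~: S); rewrite ?cut_setC // !inE -yzS.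
have := minimal_cut_side_const (P := fun u => t u == t y) conn Smin KS Pbal yK zK.
by rewrite /= eqxx => <-.
Qed.

Lemma cut_eq_constant_on g S S' : constant_on (fun y => y \in S) (fun y => y \in S') ->
  cut g S' != set0 -> cut g S' = cut g S.
Proof.
move=> const /set0Pn [[e1 v1]]; rewrite inE => /andP [_ sep'].
have sep : (inl e1 \in S) != (inr v1 \in S) by apply: contra sep' => /eqP /const ->.
have side y :
    (y \in S') = if (y \in S) == (inl e1 \in S) then inl e1 \in S' else inr v1 \in S'.
  case: eqP => yS; apply: const => //.
  by move: yS sep; case: (y \in S); case: (inl e1 \in S); case: (inr v1 \in S).
apply/setP => -[e v]; rewrite !inE /= (side (inl e)) (side (inr v)).
by move: sep sep'; case: (inl e \in S); case: (inr v \in S); case: (inl e1 \in S);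
  case: (inr v1 \in S); case: (inl e1 \in S'); case: (inr v1 \in S'); rewrite ?andbT ?andbF.
Qed.

Lemma minimal_cut_of_constant_on g S : cut g S != set0 ->
  (forall t : X -> R, balanced (g :\: cut g S) t -> constant_on (fun y => y \in S) t) ->
  minimal_cut g S.
Proof.
move=> cutS0 const; split => // S' cutS'0 sub; apply: cut_eq_constant_on cutS'0 => y z yzS.
have bal : balanced (g :\: cut g S) (fun u => (u \in S')%:R : R).
  move=> p; rewrite inE => /andP [pS pg].
  have : p \notin cut g S' by apply: contra pS; apply: (subsetP sub).
  by rewrite inE pg negbK => /eqP ->.
by have /eqP := const _ bal y z yzS; rewrite eqr_nat; case: (y \in S'); case: (z \in S').
Qed.

Lemma minimal_cut_rank_ann g S : bip_connected g -> cut g S != set0 ->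
  minimal_cut g S <-> \rank (ann_mx (g :\: cut g S)) = 2.
Proof.
move=> conn cutS0; have [[e v]] := set0Pn _ cutS0; rewrite inE => /andP [_ sep].
pose w (s : bool) : X := if s == (inl e \in S) then inl e else inr v.
have wK : cancel w (fun y => y \in S).
  rewrite /w => s; case: eqP => [-> //|].
  by move: sep; case: s; case: (_ \in S); case: (_ \in S).
have bal : balanced (g :\: cut g S) (fun y => y \in S).
  by move=> p; rewrite mem_uncut => /andP [_ /eqP].
have := rank_ann_mx_blocks wK bal; rewrite card_bool => ->; split => [Smin t|].
  exact: minimal_cut_constant_on.
exact: minimal_cut_of_constant_on.
Qed.

Lemma cut_sign_edge g S p : directed_split g S -> p \in g ->
  cut_sign R S (inl p.1) + cut_sign R S (inr p.2) = 2 * (p \in cut g S)%:R.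
Proof.
case: p => e v dir ev; rewrite inE ev /= /cut_sign.
have [eS|eNS] := boolP (inl e \in S); first by rewrite (dir e v ev eS) /= mulr0; lra.
by case: (inr v \in S); rewrite /= ?mulr0 ?mulr1; lra.
Qed.

Lemma neg_cut_sign_edge_le g S : directed_split g S -> forall p, p \in g ->
  - cut_sign R S (inl p.1) + - cut_sign R S (inr p.2) <= 0.
Proof. by move=> dir p pg; rewrite -opprD (cut_sign_edge dir pg) oppr_le0 mulr_ge0. Qed.

Lemma sum_neg_cut_sign_eq0 S x :
  \sum_y - cut_sign R S y * x y = 0 <-> lambda_C R S x = 0.
Proof.
have -> : \sum_y - cut_sign R S y * x y = - lambda_C R S x.
  by rewrite /lambda_C -sumrN; apply: eq_bigr => y _; rewrite mulNr.
by split => [/eqP|->]; rewrite ?oppr0 // oppr_eq0 => /eqP.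
Qed.

Lemma lambda_C_faceE g S x : directed_split g S ->
  (root_polytope R g x /\ lambda_C R S x = 0) <-> root_polytope R (g :\: cut g S) x.
Proof.
move=> dir; have le := neg_cut_sign_edge_le dir.
have -> : g :\: cut g S =
    [set p in g | - cut_sign R S (inl p.1) + - cut_sign R S (inr p.2) == 0].
  apply/setP => p; rewrite mem_uncut inE; case: (boolP (p \in g)) => //= pg.
  by rewrite -opprD oppr_eq0 (cut_sign_edge dir pg) mulf_eq0 !pnatr_eq0 eqb0 inE pg negbK.
by rewrite -(root_polytope_face (a := fun y => - cut_sign R S y) x le) sum_neg_cut_sign_eq0.
Qed.

Lemma lambda_C_is_face g S : directed_split g S ->
  is_face (root_polytope R g) (fun x => root_polytope R g x /\ lambda_C R S x = 0).
Proof.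
move=> dir; exists (fun y => - cut_sign R S y), 0; split => x.
  exact: (root_polytope_dot_le (a := fun y => - cut_sign R S y) (neg_cut_sign_edge_le dir)).
by rewrite sum_neg_cut_sign_eq0.
Qed.

Lemma root_polytope_facet_rank g H (F : (X -> R) -> Prop) :
  bip_connected g -> (forall x, F x <-> root_polytope R H x) ->
  (exists n, [/\ has_aff_indep (root_polytope R g) n.+1,
                 ~ has_aff_indep (root_polytope R g) n.+2,
                 has_aff_indep F n & ~ has_aff_indep F n.+1])
  <-> \rank (ann_mx H) = 2.
Proof.
move=> conn FH; have dimF k : has_aff_indep F k <-> (k <= \rank (edge_mx H))%N.
  rewrite -has_aff_indep_root_polytope.
  by split; apply: has_aff_indep_ext => x; [|apply: iff_sym]; apply: FH.
apply: iff_trans (facet_dimension_rank (@has_aff_indep_root_polytope g) dimF) _.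
rewrite !rank_edge_mx rank_ann_mx_connected //; have := rank_leq_col (ann_mx H); lia.
Qed.

Lemma directed_minimal_cut_facet g S :
  bip_connected g -> minimal_cut g S -> directed_split g S ->
  is_facet (root_polytope R g) (fun x => root_polytope R g x /\ lambda_C R S x = 0).
Proof.
move=> conn Smin dir; split; first exact: lambda_C_is_face.
apply/(root_polytope_facet_rank conn (fun x => lambda_C_faceE x dir)).
by apply/minimal_cut_rank_ann => //; case: Smin.
Qed.

Lemma potential_directed_cut g (t : X -> R) : bip_connected g ->
  (forall p, p \in g -> t (inl p.1) <= t (inr p.2)) ->
  \rank (ann_mx [set p in g | t (inl p.1) == t (inr p.2)]) = 2 ->
  exists S, [/\ cut g S != set0, directed_split g S &
                g :\: cut g S = [set p in g | t (inl p.1) == t (inr p.2)]].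
Proof.
set H := [set p in g | _] => conn t_le rk.
have [[e0 v0] /andP [p0g /= lt0]] : exists p, (p \in g) && (t (inl p.1) < t (inr p.2)).
  apply/existsP; case: (boolP [exists p, _]) => // /existsPn strict.
  have Hg : H = g.
    apply/setP => p; rewrite inE; case: (boolP (p \in g)) => //= pg.
    by have := strict p; rewrite pg lt_neqAle t_le // andbT negbK.
  by move: rk; rewrite Hg rank_ann_mx_connected //; lia.
set S := [set y | t y == t (inr v0)].
have e0S : inl e0 \notin S by rewrite inE lt_eqF.
pose w (s : bool) : X := if s then inr v0 else inl e0.
have wK : cancel w (fun y => y \in S).
  by move=> []; rewrite /w ?(negbTE e0S) ?inE ?eqxx.
have bal : balanced H (fun y => y \in S) by move=> p; rewrite !inE => /andP [_ /eqP ->].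
have tbal : balanced H t by move=> p; rewrite inE => /andP [_ /eqP].
have tE y : t y = if y \in S then t (inr v0) else t (inl e0).
  have rkB : \rank (ann_mx H) = #|{: bool}| by rewrite card_bool.
  have tconst := (rank_ann_mx_blocks wK bal).1 rkB t tbal.
  by case: ifP => [|yS]; [rewrite inE => /eqP | apply: tconst; rewrite yS (negbTE e0S)].
exists S; split.
- by apply/set0Pn; exists (e0, v0); rewrite inE p0g (negbTE e0S) inE eqxx.
- move=> e v ev eS; apply: contraT => vS; have := t_le _ ev.
  by rewrite /= (tE (inl e)) (tE (inr v)) eS (negbTE vS) leNgt lt0.
- apply/setP => -[e v]; rewrite mem_uncut [in RHS]inE.
  case: (boolP ((e, v) \in g)) => //= ev.
  have ne : (t (inl e0) == t (inr v0)) = false by rewrite lt_eqF.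
  rewrite (tE (inl e)) (tE (inr v)).
  by case: (inl e \in S); case: (inr v \in S);
    rewrite /= ?eqxx // -?(eq_sym (t (inl e0))) ne.
Qed.

Lemma facet_directed_minimal_cut g F :
  bip_connected g -> is_facet (root_polytope R g) F ->
  exists S, [/\ minimal_cut g S, directed_split g S &
    forall x, F x <-> (root_polytope R g x /\ lambda_C R S x = 0)].
Proof.
move=> conn [[a [c [a_le Fface]]] dims].
pose t := twist (fun y => a y - c / 2).
have slackE p : t (inr p.2) - t (inl p.1) = c - (a (inl p.1) + a (inr p.2)).
  by rewrite /t /twist /=; lra.
have edge_le p : p \in g -> a (inl p.1) + a (inr p.2) <= c.
  by move=> pg; rewrite -dot_edge_pt a_le //; apply: root_polytope_edge_pt.
have t_le p : p \in g -> t (inl p.1) <= t (inr p.2).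
  by move=> pg; rewrite -subr_ge0 slackE subr_ge0 edge_le.
have tightE : [set p in g | a (inl p.1) + a (inr p.2) == c] =
              [set p in g | t (inl p.1) == t (inr p.2)].
  apply/setP => p; rewrite !inE; congr (_ && _).
  by rewrite eq_sym -subr_eq0 -slackE subr_eq0 eq_sym.
have FH x : F x <-> root_polytope R [set p in g | t (inl p.1) == t (inr p.2)] x.
  by rewrite -tightE -(root_polytope_face x edge_le).
have rk := (root_polytope_facet_rank conn FH).1 dims.
have [S [cutS0 dir SE]] := potential_directed_cut conn t_le rk.
exists S; split => //.
  by apply/(minimal_cut_rank_ann conn cutS0); rewrite SE.
by move=> x; rewrite FH -SE lambda_C_faceE.
Qed.

End RootPolytope.

Theorem proposition3p6 (R : realType) (E V : finType) (g : {set E * V})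
  (Gconn : bip_connected g) :
  (forall S : {set (E + V)%type},
     minimal_cut g S -> directed_split g S ->
     is_facet (root_polytope R g)
              (fun x => root_polytope R g x /\ lambda_C R S x = 0))
  /\
  (forall F : ((E + V)%type -> R) -> Prop,
     is_facet (root_polytope R g) F ->
     exists S : {set (E + V)%type},
       [/\ minimal_cut g S, directed_split g S &
           forall x, F x <-> (root_polytope R g x /\ lambda_C R S x = 0)]).
Proof.
split => [S | F].
  exact: directed_minimal_cut_facet.
exact: facet_directed_minimal_cut.
Qed.
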